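(* Let $k\geq 2$, $t\geq 0$, and $n\geq k^2+tk(k-1)$ be integers such that $k^2+tk(k-1)$ divides $n$. If there exists a $(k^2+tk(k-1),k,1)$-RBIBD, then there is a coloring of the edges of the complete graph $K_n$ with $(t+1)k+1$ colors such that every monochromatic component has at most $\frac{n}{(t+1)k-t}$ vertices. In particular (the case $t=0$), if there exists an affine plane of order $k$, then there exists a coloring of the edges of $K_n$ with $k+1$ colors such that every monochromatic component has at most $\frac{n}{k}$ vertices.
   Context: A $(v,k,1)$-resolvable balanced incomplete block design ($(v,k,1)$-RBIBD) is a $k$-uniform hypergraph on $v$ vertices in which each pair of distinct vertices lies in exactly one edge, and whose edge set can be partitioned into perfect matchings. An affine plane of order $k$ is a $k$-uniform hypergraph on $k^2$ vertices with $k(k+1)$ edges such that each pair of distinct vertices lies in exactly one edge (equivalently a $(k^2,k,1)$-RBIBD). A monochromatic component is a maximal connected subgraph all of whose edges have the same color. *)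

From mathcomp Require Import all_boot.
Set Implicit Arguments. Unset Strict Implicit. Unset Printing Implicit Defensive.

Definition uniform (v k : nat) (B : {set {set 'I_v}}) : Prop :=
  forall b, b \in B -> #|b| = k.

Definition pairs_once (v : nat) (B : {set {set 'I_v}}) : Prop :=
  forall x y : 'I_v, x != y -> #|[set b in B | (x \in b) && (y \in b)]| = 1.

Definition perfect_matching (v : nat) (M : {set {set 'I_v}}) : Prop :=
  forall x : 'I_v, #|[set b in M | x \in b]| = 1.

Definition RBIBD (v k : nat) (B : {set {set 'I_v}}) : Prop :=
  [/\ uniform k B, pairs_once B &
      exists P : {set {set {set 'I_v}}},
        partition P B /\ forall M, M \in P -> perfect_matching M].

Definition affine_plane (k : nat) (B : {set {set 'I_(k ^ 2)}}) : Prop :=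
  [/\ #|B| = k * (k + 1), uniform k B & pairs_once B].

Definition edge_coloring (n c : nat) (col : 'I_n -> 'I_n -> 'I_c) : Prop :=
  forall x y, col x y = col y x.

Definition color_rel (n c : nat) (col : 'I_n -> 'I_n -> 'I_c) (i : 'I_c) : rel 'I_n :=
  fun x y => (x != y) && (col x y == i).

Definition mono_component (n c : nat) (col : 'I_n -> 'I_n -> 'I_c) (i : 'I_c) (x : 'I_n)
  : {set 'I_n} := [set y | connect (color_rel col i) x y].

From mathcomp Require Import all_boot zify.
Set Implicit Arguments. Unset Strict Implicit. Unset Printing Implicit Defensive.

(* Blow every point of the design up into n/v vertices and colour the edge xy
   by the parallel class of the block through the images of x and y. A
   monochromatic component then lies in the blow-up of a single block, so it
   has at most k n/v vertices, and the number of colours is the replication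
   number r = (v-1)/(k-1). An affine plane is resolvable: by Playfair's axiom
   (the case r = k+1) every block has exactly one parallel through a fixed
   point p0, which indexes its parallel class. *)

Lemma sum_pred_card (T : finType) (A : {set T}) (P : pred T) :
  \sum_(x in A) (P x : nat) = #|[set x in A | P x]|.
Proof.
transitivity (\sum_(x in A | P x) 1).
  by rewrite big_mkcondr; apply: eq_bigr => x _; case: (P x).
by rewrite -sum1_card; apply: eq_bigl => x; rewrite !inE.
Qed.

Lemma exists_inj_ord (T : finType) (A : {set T}) c :
  0 < c -> #|A| <= c -> exists h : T -> 'I_c, {in A &, injective h}.
Proof.
move=> c_gt0 leAc; have [-> | [x0 Ax0]] := set_0Vmem A.
  by exists (fun=> Ordinal c_gt0) => x y; rewrite inE.
exists (fun x => widen_ord leAc (enum_rank_in Ax0 x)).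
move=> x y Ax Ay /(congr1 val) /= /val_inj; exact: enum_rank_in_inj.
Qed.

Definition blocks_through v (B : {set {set 'I_v}}) (p : 'I_v) : {set {set 'I_v}} :=
  [set b in B | p \in b].

Definition parallelism v (T : Type) (B : {set {set 'I_v}}) (cl : {set 'I_v} -> T) :=
  forall b1 b2 p, b1 \in B -> b2 \in B -> cl b1 = cl b2 ->
    p \in b1 -> p \in b2 -> b1 = b2.

Section LinearSpace.

Variables (v k : nat) (B : {set {set 'I_v}}).
Hypothesis B_pairs : pairs_once B.

Lemma block_eq_of_pair b1 b2 x y : b1 \in B -> b2 \in B -> x != y ->
  x \in b1 -> y \in b1 -> x \in b2 -> y \in b2 -> b1 = b2.
Proof.
move=> b1B b2B xy xb1 yb1 xb2 yb2.
apply: (card_le1_eqP (eq_leq (B_pairs xy))); by rewrite inE ?b1B ?b2B ?xb1 ?yb1 ?xb2 ?yb2.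
Qed.

Lemma exists_block p q : 1 < v -> exists2 b, b \in B & (p \in b) && (q \in b).
Proof.
move=> v_gt1.
suff block_pq r s : r != s -> exists2 b, b \in B & (r \in b) && (s \in b).
  have [<- | /block_pq //] := eqVneq p q.
  have /card_gt0P[r] : 0 < #|[set~ p]| by rewrite cardsC1 card_ord -subn1 subn_gt0.
  rewrite !inE eq_sym => /block_pq[b bB /andP[pb _]].
  by exists b; rewrite ?pb.
move=> rs; have /card_gt0P[b] : 0 < #|[set b in B | (r \in b) && (s \in b)]|.
  by rewrite (B_pairs rs).
by rewrite inE => /andP[]; exists b.
Qed.

Definition block_of p q := odflt set0 [pick b in B | (p \in b) && (q \in b)].

Lemma block_ofC p q : block_of p q = block_of q p.
Proof. by congr odflt; apply: eq_pick => b; rewrite [(p \in b) && _]andbC. Qed.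

Lemma block_ofP p q : 1 < v ->
  [/\ block_of p q \in B, p \in block_of p q & q \in block_of p q].
Proof.
move=> v_gt1; rewrite /block_of; case: pickP => [b /andP[-> /andP[-> ->]] // | none].
by have [b bB pqb] := exists_block p q v_gt1; have := none b; rewrite bB pqb.
Qed.

Lemma parallelism_ord (T : eqType) (cl : {set 'I_v} -> T) p c :
  0 < c -> #|blocks_through B p| <= c -> parallelism B cl ->
  {in B, forall b, exists2 b', b' \in blocks_through B p & cl b' = cl b} ->
  exists cl' : {set 'I_v} -> 'I_c, parallelism B cl'.
Proof.
move=> c_gt0 le_c cl_par class_through_p.
have [h h_inj] := exists_inj_ord c_gt0 le_c.
pose rep b := odflt b [pick b' in blocks_through B p | cl b' == cl b].
have repP b : b \in B -> rep b \in blocks_through B p /\ cl (rep b) = cl b.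
  move=> bB; rewrite /rep; case: pickP => [b' /andP[b'p /eqP] | none] //=.
  have [b' b'p eq_cl] := class_through_p b bB.
  by have := none b'; rewrite b'p eq_cl eqxx.
exists (h \o rep) => b1 b2 q b1B b2B /= eq_h; apply: cl_par => //.
have [r1 c1] := repP b1 b1B; have [r2 c2] := repP b2 b2B.
by rewrite -c1 -c2 (h_inj _ _ r1 r2 eq_h).
Qed.

Lemma sum_card_blocks_through_setI p (S : {set 'I_v}) : p \notin S ->
  \sum_(b in blocks_through B p) #|b :&: S| = #|S|.
Proof.
move=> pS; transitivity (\sum_(b in blocks_through B p) \sum_(q in S) (q \in b : nat)).
  apply: eq_bigr => b _; rewrite sum_pred_card.
  by apply: eq_card => q; rewrite !inE andbC.
rewrite exchange_big -sum1_card; apply: eq_bigr => q qS /=.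
have pq : p != q by apply: contraNneq pS => ->.
rewrite -(B_pairs pq) sum_pred_card.
by apply: eq_card => b; rewrite !inE andbA.
Qed.

Hypothesis B_uniform : uniform k B.

Lemma card_blocks_through p : #|blocks_through B p| * (k - 1) = v - 1.
Proof.
have -> : v - 1 = #|[set~ p]| by rewrite cardsC1 card_ord subn1.
rewrite -sum_nat_const -(@sum_card_blocks_through_setI p) ?setC11 //.
apply: eq_bigr => b; rewrite inE => /andP[bB pb].
rewrite -setDE -(B_uniform bB) (cardsD1 p b) pb.
by rewrite add1n subn1.
Qed.

Lemma card_blocks_through_eq r p : 1 < k -> r * (k - 1) = v - 1 ->
  #|blocks_through B p| = r.
Proof.
move=> k_gt1 r_eq; apply/eqP; rewrite -(@eqn_pmul2r (k - 1)) ?subn_gt0 //.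
by rewrite card_blocks_through r_eq.
Qed.

Lemma card_parallels_through p L : L \in B -> p \notin L ->
  #|blocks_through B p| = k + 1 ->
  #|[set b in blocks_through B p | [disjoint b & L]]| = 1.
Proof.
move=> LB pL r_eq.
have meet_card b : b \in blocks_through B p -> #|b :&: L| = ~~ [disjoint b & L].
  rewrite inE => /andP[bB pb]; have [bL | nbL] /= := boolP [disjoint b & L].
    by rewrite (disjoint_setI0 bL) cards0.
  apply/eqP; rewrite eqn_leq card_gt0 setI_eq0 nbL andbT.
  apply/card_le1_eqP => x y; rewrite !inE => /andP[xb xL] /andP[yb yL].
  apply/eqP; apply: contraT => xy.
  by move: pL; rewrite -(block_eq_of_pair bB LB xy yb xb yL xL) pb.
have := sum_card_blocks_through_setI pL.
rewrite (eq_bigr _ meet_card) sum_pred_card (B_uniform LB) => meeting_k.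
have := cardsID [set b : {set 'I_v} | ~~ [disjoint b & L]] (blocks_through B p).
rewrite -setIdE meeting_k r_eq.
have -> : blocks_through B p :\: [set b : {set 'I_v} | ~~ [disjoint b & L]] =
          [set b in blocks_through B p | [disjoint b & L]].
  by apply/setP => b; rewrite !inE negbK andbC.
exact: addnI.
Qed.

End LinearSpace.

Lemma exists_uniform_fibres m v :
  exists f : 'I_(m * v) -> 'I_v, forall S : {set 'I_v}, #|f @^-1: S| = #|S| * m.
Proof.
have card_pairs : #|{: 'I_v * 'I_m}| = m * v by rewrite card_prod !card_ord mulnC.
pose g x : 'I_v * 'I_m := enum_val (cast_ord (esym card_pairs) x).
have g_bij : bijective g.
  apply: bij_comp; first exact: enum_val_bij.
  exact: (Bijective (cast_ordK _) (cast_ordKV _)).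
exists (fun x => (g x).1) => S.
have -> : (fun x => (g x).1) @^-1: S = g @^-1: setX S setT.
  by apply/setP => x; rewrite !inE andbT.
by rewrite on_card_preimset ?cardsX ?cardsT ?card_ord //; exact: onW_bij.
Qed.

Section Blowup.

Variables (v k c : nat) (B : {set {set 'I_v}}) (cl : {set 'I_v} -> 'I_c).
Hypotheses (B_pairs : pairs_once B) (B_uniform : uniform k B).
Hypothesis cl_parallel : parallelism B cl.

Definition star i p := p |: \bigcup_(b in blocks_through B p | cl b == i) b.

Lemma card_star i p : 0 < k -> #|star i p| <= k.
Proof.
move=> k_gt0; case: (pickP [pred b in blocks_through B p | cl b == i]) => [b0 | none].
  rewrite /= inE => /andP[/andP[b0B pb0] /eqP cl_b0].
  rewrite -(B_uniform b0B) subset_leq_card //; apply/subsetP => q.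
  rewrite !inE => /orP[/eqP -> // | /bigcupP[b]].
  rewrite inE => /andP[/andP[bB pb] /eqP cl_b] qb.
  by rewrite (cl_parallel b0B bB _ pb0 pb) // cl_b cl_b0.
by rewrite /star big_pred0 ?setU0 ?cards1.
Qed.

Lemma star_closed i p b q r : b \in B -> cl b = i -> q \in b -> r \in b ->
  q \in star i p -> r \in star i p.
Proof.
move=> bB cl_b qb rb; rewrite !inE => /orP[/eqP pq | /bigcupP[b' ]].
  by apply/orP; right; apply/bigcupP; exists b; rewrite // !inE bB -pq qb cl_b eqxx.
rewrite inE => /andP[/andP[b'B pb'] /eqP cl_b'] qb'.
apply/orP; right; apply/bigcupP; exists b'; rewrite ?inE ?b'B ?pb' ?cl_b' ?eqxx //.
by rewrite (cl_parallel b'B bB _ qb' qb) // cl_b' cl_b.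
Qed.

Lemma blowup_coloring m : 1 < v -> 0 < k ->
  exists col : 'I_(m * v) -> 'I_(m * v) -> 'I_c,
    edge_coloring col /\ forall i x, #|mono_component col i x| <= m * k.
Proof.
move=> v_gt1 k_gt0; have [f card_fibre] := exists_uniform_fibres m v.
pose col x y := cl (block_of B (f x) (f y)).
exists col; split => [x y | i x]; first by rewrite /col block_ofC.
have closed_star : closed (color_rel col i) (f @^-1: star i (f x)).
  move=> y z /andP[_ /eqP col_yz].
  have [bB yb zb] := block_ofP B_pairs (f y) (f z) v_gt1.
  rewrite inE [in RHS]inE; apply/idP/idP.
  - exact: star_closed bB col_yz yb zb.
  - exact: star_closed bB col_yz zb yb.
have sub : mono_component col i x \subset f @^-1: star i (f x).
  apply/subsetP => y; rewrite inE => /(closed_connect closed_star) <-.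
  by rewrite !inE eqxx.
by rewrite (leq_trans (subset_leq_card sub)) // card_fibre mulnC leq_mul2l card_star ?orbT.
Qed.

End Blowup.

Section Resolution.

Variables (v : nat) (B : {set {set 'I_v}}) (P : {set {set {set 'I_v}}}).
Hypothesis P_partition : partition P B.
Hypothesis P_matchings : forall M, M \in P -> perfect_matching M.

Lemma pblock_parallelism : parallelism B (pblock P).
Proof.
move=> b1 b2 p b1B b2B eq_pb pb1 pb2.
have /and3P[/eqP cover_P _ _] := P_partition.
have b1M : b1 \in pblock P b1 by rewrite mem_pblock cover_P.
have b2M : b2 \in pblock P b1 by rewrite eq_pb mem_pblock cover_P.
have MP : pblock P b1 \in P by rewrite pblock_mem ?cover_P.
by apply: (card_le1_eqP (eq_leq (P_matchings MP p))); rewrite inE ?b1M ?b2M.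
Qed.

Lemma pblock_through p :
  {in B, forall b, exists2 b', b' \in blocks_through B p & pblock P b' = pblock P b}.
Proof.
move=> b bB; have /and3P[/eqP cover_P triv_P _] := P_partition.
have MP : pblock P b \in P by rewrite pblock_mem ?cover_P.
have /card_gt0P[b'] : 0 < #|[set b' in pblock P b | p \in b']| by rewrite P_matchings.
rewrite inE => /andP[b'M pb']; exists b'; last exact: def_pblock.
by rewrite inE pb' andbT -cover_P; apply/bigcupP; exists (pblock P b).
Qed.

End Resolution.

Section AffinePlane.

Variables (v k : nat) (B : {set {set 'I_v}}) (p0 : 'I_v).
Hypotheses (B_pairs : pairs_once B) (B_uniform : uniform k B).
Hypothesis B_replication : forall p, #|blocks_through B p| = k + 1.

Definition parallel_through (b : {set 'I_v}) : {set 'I_v} :=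
  if p0 \in b then b
  else odflt set0 [pick b' in blocks_through B p0 | [disjoint b' & b]].

Lemma parallel_throughP (b : {set 'I_v}) : b \in B ->
  parallel_through b \in blocks_through B p0 /\
  (p0 \notin b -> [disjoint parallel_through b & b]).
Proof.
move=> bB; rewrite /parallel_through; have [p0b | p0b] := boolP (p0 \in b).
  by rewrite inE bB p0b.
case: pickP => [b' /andP[-> ->] // | none].
have /card_gt0P[b'] : 0 < #|[set b' in blocks_through B p0 | [disjoint b' & b]]|.
  by rewrite (card_parallels_through B_pairs B_uniform bB p0b).
by rewrite inE none.
Qed.

Lemma parallel_through_id (b : {set 'I_v}) : p0 \in b -> parallel_through b = b.
Proof. by rewrite /parallel_through => ->. Qed.

Lemma parallel_through_parallelism : parallelism B parallel_through.
Proof.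
move=> b1 b2 p b1B b2B eq_par pb1 pb2.
have [thr1 dis1] := parallel_throughP b1B; have [_ dis2] := parallel_throughP b2B.
have [p0b1 | p0b1] := boolP (p0 \in b1); have [p0b2 | p0b2] := boolP (p0 \in b2).
- by rewrite -(parallel_through_id p0b1) -(parallel_through_id p0b2).
- move: (dis2 p0b2); rewrite -eq_par parallel_through_id // => /disjointFr/(_ pb1).
  by rewrite pb2.
- move: (dis1 p0b1); rewrite eq_par parallel_through_id // => /disjointFr/(_ pb2).
  by rewrite pb1.
set L := parallel_through b1 in eq_par dis1 thr1.
have LB : L \in B by move: thr1; rewrite inE => /andP[].
have pL : p \notin L by rewrite (disjointFl (dis1 p0b1) pb1).
have b1L : [disjoint b1 & L] by rewrite disjoint_sym dis1.
have b2L : [disjoint b2 & L] by rewrite disjoint_sym eq_par dis2.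
have := card_parallels_through B_pairs B_uniform LB pL (B_replication p).
by move/eq_leq/card_le1_eqP; apply; rewrite !inE ?b1B ?b2B ?pb1 ?pb2.
Qed.

Lemma parallel_through_class :
  {in B, forall b, exists2 b', b' \in blocks_through B p0 &
                   parallel_through b' = parallel_through b}.
Proof.
move=> b bB; have [thr _] := parallel_throughP bB.
exists (parallel_through b) => //; apply: parallel_through_id.
by move: thr; rewrite inE => /andP[].
Qed.

End AffinePlane.

Theorem fact4p2 :
  (forall k t n : nat,
    2 <= k ->
    k ^ 2 + t * k * (k - 1) <= n ->
    (k ^ 2 + t * k * (k - 1)) %| n ->
    (exists B : {set {set 'I_(k ^ 2 + t * k * (k - 1))}}, RBIBD k B) ->
    exists col : 'I_n -> 'I_n -> 'I_((t + 1) * k + 1),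
      edge_coloring col /\
      forall i x, #|mono_component col i x| * ((t + 1) * k - t) <= n)
  /\
  (forall k n : nat,
    2 <= k -> k ^ 2 <= n -> k ^ 2 %| n ->
    (exists B : {set {set 'I_(k ^ 2)}}, affine_plane B) ->
    exists col : 'I_n -> 'I_n -> 'I_(k + 1),
      edge_coloring col /\
      forall i x, #|mono_component col i x| * k <= n).
Proof.
split=> [k t n k_ge2 _ /dvdnP[m ->] [B [B_uniform B_pairs [P [P_part P_match]]]] |
         k n k_ge2 _ /dvdnP[m ->] [B [_ B_uniform B_pairs]]].
- set v := k ^ 2 + t * k * (k - 1) in B B_uniform B_pairs P P_part P_match *.
  have v_gt1 : 1 < v by rewrite /v; nia.
  pose p0 : 'I_v := Ordinal (ltnW v_gt1).
  have r_eq : #|blocks_through B p0| = (t + 1) * k + 1.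
    by apply: (card_blocks_through_eq B_pairs B_uniform p0 k_ge2); rewrite /v; nia.
  have [cl cl_par] := parallelism_ord (ltn_addl _ (ltnSn 0)) (eq_leq r_eq)
    (pblock_parallelism P_part P_match) (pblock_through P_part P_match p0).
  have [col [col_sym col_small]] :=
    blowup_coloring B_pairs B_uniform cl_par m v_gt1 (ltnW k_ge2).
  exists col; split => // i x.
  by apply: leq_trans (leq_mul (col_small i x) (leqnn _)) _; rewrite /v; nia.
- have v_gt1 : 1 < k ^ 2 by nia.
  have r_eq p : #|blocks_through B p| = k + 1.
    by apply: (card_blocks_through_eq B_pairs B_uniform p k_ge2); nia.
  pose p0 : 'I_(k ^ 2) := Ordinal (ltnW v_gt1).
  have [cl cl_par] := parallelism_ord (ltn_addl _ (ltnSn 0)) (eq_leq (r_eq p0))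
    (parallel_through_parallelism (p0 := p0) B_pairs B_uniform r_eq)
    (parallel_through_class p0 B_pairs B_uniform r_eq).
  have [col [col_sym col_small]] :=
    blowup_coloring B_pairs B_uniform cl_par m v_gt1 (ltnW k_ge2).
  exists col; split => // i x.
  by apply: leq_trans (leq_mul (col_small i x) (leqnn _)) _; nia.
Qed.
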